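(* Let $(V,\kappa,\varpi,\Theta)$ be a synergistic feedback quadruple relative to a compact set $\mathcal{A}$, with gap exceeding $\delta>0$, for the extended system, where $\kappa$ has the decomposition $\kappa(x,\theta)=\varsigma(x)+\Upsilon(x)\sigma(x,\theta)$, and suppose Assumption 1 holds with constant $c_\kappa>0$. Choose $0<\gamma_s<\delta/c_\kappa$ and $k_\eta>0$, and define $V_s,\kappa_s$ as below. Then $(V_s,\kappa_s,\varpi,\Theta)$ is a synergistic feedback quadruple relative to the set $\mathcal{A}_s=\{(x,\eta,\theta)\in\mathcal{X}_s\times\mathbb{R}^r:(x,\theta)\in\mathcal{A},\ \eta=\sigma(x,\theta)\}$ for the smooth extended system, with gap exceeding any $\delta_s\in(0,\delta-\gamma_sc_\kappa]$.
   Context: Let $\mathcal{X}\subseteq\mathbb{R}^n$ be closed and nonempty, and let $f:\mathcal{X}\to\mathbb{R}^n$, $g:\mathcal{X}\to\mathbb{R}^{n\times m}$ be smooth, defining the control system $\dot x=f(x)+g(x)u$. Let $r\ge 1$, let $\Theta\subset\mathbb{R}^r$ be finite and nonempty, and let $\varpi:\mathcal{X}\times\mathbb{R}^r\to\mathbb{R}^r$ be smooth. The extended system is $\frac{d}{dt}(x,\theta)=f_c(x,\theta)+g_c(x,\theta)u$ with $f_c(x,\theta)=(f(x),\varpi(x,\theta))$ and $g_c(x,\theta)=(g(x),0)$. General definitions (for any system $\dot z=\tilde f(z,\theta)+\tilde g(z,\theta)v$ on $\mathcal{Z}\times\mathbb{R}^r$, $\mathcal{Z}$ closed, with $\dot\theta$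 being the last block of the drift): for smooth $W:\mathcal{Z}\times\mathbb{R}^r\to\mathbb{R}_{\ge0}$ and feedback $k$, $\mu_{W,\Theta}(z,\theta)=W(z,\theta)-\min_{\bar\theta\in\Theta}W(z,\bar\theta)$; $\mathcal{E}_W=\{(z,\theta):\langle\nabla W,\tilde f+\tilde g k\rangle=0\}$ with $\nabla W$ the full gradient; $\Psi_W\subseteq\mathcal{E}_W$ is the largest subset of $\mathcal{E}_W$ that is weakly invariant (weakly forward and backward invariant) for the closed-loop flow $\dot z=\tilde f+\tilde gk$. Given compact $\mathcal{A}'$ and $\delta'>0$, $(W,k,\varpi,\Theta)$ is a synergistic feedback quadruple relative to $\mathcal{A}'$ for that system with gap exceeding $\delta'$ if (C1) every sublevel set $\{W\le\epsilon\}$, $\epsilon\ge0$, is compact; (C2) $W$ is positive definite with respect to $\mathcal{A}'$; (C3) $\langle\nabla W,\tilde f+\tilde gk\rangle\le0$ everywhere; (C4) $\inf_{\Psi_W\setminus\mathcal{A}'}\mu_{W,\Theta}>\delta'$. (For the extended system this is applied with $z=x$, $\tilde f=f_c$, $\tilde g=g_c$.) Decomposition: $\varsigma:\mathcal{X}\to\mathbb{R}^m$, $\Upsilon:\mathcal{X}\to\mathbb{R}^{m\times s}$, $\sigma:\mathcal{X}\times\mathbb{R}^r\to\mathbb{R}^s$ smooth with $\kappa(x,\theta)=\varsigma(x)+\Upsilon(x)\sigma(x,\theta)$; set $\bar\kappa(x,\eta)=\varsigma(x)+\Upsilon(x)\eta$ for $\eta\in\mathbb{R}^s$. Assumption 1: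 there is $c_\kappa>0$ with $\max_{\bar\theta\in\Theta}\|\sigma(x,\theta)-\sigma(x,\bar\theta)\|^2\le2c_\kappa$ for all $(x,\theta)\in\Psi_V\setminus\mathcal{A}$, where $\Psi_V$ is defined for the extended system with $W=V$, $k=\kappa$. Smooth extended system: state $x_s=(x,\eta)\in\mathcal{X}_s:=\mathcal{X}\times\mathbb{R}^s$ and $\theta\in\mathbb{R}^r$, with $\dot x=f(x)+g(x)\bar\kappa(x,\eta)$, $\dot\eta=u_s$, $\dot\theta=\varpi(x,\theta)$, i.e. drift $f_s=(f+g\bar\kappa,0,\varpi)$ and input matrix $g_s=(0,I_s,0)$. $V_s(x_s,\theta)=V(x,\theta)+\frac{\gamma_s}{2}\|\eta-\sigma(x,\theta)\|^2$, and $\kappa_s(x_s,\theta)=-k_\eta(\eta-\sigma(x,\theta))+\mathcal{D}_t\sigma(x,\theta)-\frac{1}{\gamma_s}\Upsilon(x)^\top g(x)^\top\nabla_xV(x,\theta)$, where $\mathcal{D}_t\sigma(x,\theta)=\mathcal{D}_x\sigma(x,\theta)(f(x)+g(x)\bar\kappa(x,\eta))+\mathcal{D}_\theta\sigma(x,\theta)\varpi(x,\theta)$ and $\mathcal{D}_x,\mathcal{D}_\theta$ denote Jacobians. *)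

From HB Require Import structures.
From mathcomp Require Import all_boot all_order all_algebra.
From mathcomp Require Import all_classical all_reals all_analysis.
Set Implicit Arguments. Unset Strict Implicit. Unset Printing Implicit Defensive.
Import Order.TTheory GRing.Theory Num.Theory.
Import numFieldNormedType.Exports.
Local Open Scope classical_set_scope.
Local Open Scope ring_scope.

Section Defs.
Variable R : realType.

Fixpoint Ck (U V : normedModType R) (k : nat) (f : U -> V) : Prop :=
  (forall x, differentiable f x) /\
  match k with 0%N => True | k'.+1 => forall v : U, Ck k' ('D_v f) end.

Definition smooth (U V : normedModType R) (f : U -> V) : Prop :=
  forall k, Ck k f.

Definition sqnorm n (v : 'cV[R]_n) : R := \sum_(i < n) (v i ord0) ^+ 2.

Definition ecol n (i : 'I_n) : 'cV[R]_n := delta_mx i ord0.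

Definition gradx n r (W : 'cV[R]_n * 'cV[R]_r -> R) (xi : 'cV[R]_n * 'cV[R]_r)
  : 'cV[R]_n := \col_(i < n) 'D_(ecol i, 0) W xi.

Definition jacx n r s (F : 'cV[R]_n * 'cV[R]_r -> 'cV[R]_s)
  (xi : 'cV[R]_n * 'cV[R]_r) : 'M[R]_(s, n) :=
  \matrix_(i < s, j < n) ('D_(ecol j, 0) F xi) i ord0.

Definition jact n r s (F : 'cV[R]_n * 'cV[R]_r -> 'cV[R]_s)
  (xi : 'cV[R]_n * 'cV[R]_r) : 'M[R]_(s, r) :=
  \matrix_(i < s, j < r) ('D_(0, ecol j) F xi) i ord0.

(* State space Z x R^r, Z a subset of a normed space U.
   fz : z-block of the drift, w : theta-block of the drift,
   G xi v : the input matrix (zero theta-block) applied to v. *)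
Section Generic.
Variables (U : normedModType R) (r mi : nat).
Local Notation S := (U * 'cV[R]_r)%type.
Variables (Z : set U) (fz : S -> U) (G : S -> 'cV[R]_mi -> U)
          (w : S -> 'cV[R]_r).

Definition domain : set S := [set xi | Z xi.1].

Definition clvf (k : S -> 'cV[R]_mi) (xi : S) : S :=
  (fz xi + G xi (k xi), w xi).

Definition sol_on (k : S -> 'cV[R]_mi) (I : set R) (phi : R -> S) : Prop :=
  forall t, I t -> domain (phi t) /\ is_derive t 1 phi (clvf k (phi t)).

Definition weakly_fwd_inv (k : S -> 'cV[R]_mi) (M : set S) : Prop :=
  forall xi, M xi -> exists phi : R -> S,
    phi 0 = xi /\ sol_on k [set t | 0 <= t] phi /\
    (forall t, 0 <= t -> M (phi t)).

Definition weakly_bwd_inv (k : S -> 'cV[R]_mi) (M : set S) : Prop :=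
  forall q, M q -> forall T : R, 0 < T -> exists phi : R -> S,
    M (phi 0) /\ phi T = q /\ sol_on k [set t | 0 <= t <= T] phi /\
    (forall t, 0 <= t <= T -> M (phi t)).

Definition weakly_inv (k : S -> 'cV[R]_mi) (M : set S) : Prop :=
  weakly_fwd_inv k M /\ weakly_bwd_inv k M.

(* E_W : <grad W, f~ + g~ k> = 0  (full gradient; written as the differential
   of W applied to the closed-loop vector field) *)
Definition EW (W : S -> R) (k : S -> 'cV[R]_mi) : set S :=
  [set xi | domain xi /\ 'd W xi (clvf k xi) = 0].

(* Psi_W : largest weakly invariant subset of E_W (union of all of them) *)
Definition PsiW (W : S -> R) (k : S -> 'cV[R]_mi) : set S :=
  \bigcup_(M in [set M : set S | M `<=` EW W k /\ weakly_inv k M]) M.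

Definition muW (W : S -> R) (Theta : set 'cV[R]_r) (xi : S) : R :=
  W xi - inf [set W (xi.1, tb) | tb in Theta].

Definition synergistic (W : S -> R) (k : S -> 'cV[R]_mi)
   (Theta : set 'cV[R]_r) (A' : set S) (delta' : R) : Prop :=
  smooth W /\ (forall xi, domain xi -> 0 <= W xi) /\
   (forall eps : R, 0 <= eps ->
              compact [set xi | domain xi /\ W xi <= eps]) /\
   (forall xi, domain xi -> (W xi = 0 <-> A' xi)) /\
   (forall xi, domain xi -> 'd W xi (clvf k xi) <= 0) /\
   (delta'%:E < ereal_inf [set (muW W Theta xi)%:E
                                     | xi in PsiW W k `\` A'])%E.

End Generic.

Section Construction.
Variables (n m r s : nat).
Variables (f : 'cV[R]_n -> 'cV[R]_n) (g : 'cV[R]_n -> 'M[R]_(n, m))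
  (varpi : 'cV[R]_n * 'cV[R]_r -> 'cV[R]_r)
  (varsigma : 'cV[R]_n -> 'cV[R]_m) (Ups : 'cV[R]_n -> 'M[R]_(m, s))
  (sigma : 'cV[R]_n * 'cV[R]_r -> 'cV[R]_s)
  (V : 'cV[R]_n * 'cV[R]_r -> R).

(* extended system: z = x, drift (f, varpi), input matrix (g, 0) *)
Definition fc (xi : 'cV[R]_n * 'cV[R]_r) : 'cV[R]_n := f xi.1.
Definition gc (xi : 'cV[R]_n * 'cV[R]_r) (u : 'cV[R]_m) : 'cV[R]_n :=
  g xi.1 *m u.

Definition kappa_dec (xi : 'cV[R]_n * 'cV[R]_r) : 'cV[R]_m :=
  varsigma xi.1 + Ups xi.1 *m sigma xi.
Definition kappabar (x : 'cV[R]_n) (eta : 'cV[R]_s) : 'cV[R]_m :=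
  varsigma x + Ups x *m eta.

Local Notation Ss := (('cV[R]_n * 'cV[R]_s) * 'cV[R]_r)%type.

(* smooth extended system: z = x_s = (x, eta);
   drift (f + g kappabar, 0, varpi), input matrix (0, I_s, 0) *)
Definition fs (xi : Ss) : 'cV[R]_n * 'cV[R]_s :=
  (f xi.1.1 + g xi.1.1 *m kappabar xi.1.1 xi.1.2, 0).
Definition gs (xi : Ss) (u : 'cV[R]_s) : 'cV[R]_n * 'cV[R]_s :=
  (0, 1%:M *m u).
Definition varpis (xi : Ss) : 'cV[R]_r := varpi (xi.1.1, xi.2).

Definition Xs (X : set 'cV[R]_n) : set ('cV[R]_n * 'cV[R]_s) :=
  [set xs | X xs.1].

Definition As (X : set 'cV[R]_n) (A : set ('cV[R]_n * 'cV[R]_r)) : set Ss :=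
  [set xi | Xs X xi.1 /\ A (xi.1.1, xi.2) /\ xi.1.2 = sigma (xi.1.1, xi.2)].

Variables (gamma_s k_eta : R).

Definition Vs (xi : Ss) : R :=
  V (xi.1.1, xi.2) + gamma_s / 2 * sqnorm (xi.1.2 - sigma (xi.1.1, xi.2)).

Definition Dt_sigma (xi : Ss) : 'cV[R]_s :=
  let x := xi.1.1 in let eta := xi.1.2 in let th := xi.2 in
  jacx sigma (x, th) *m (f x + g x *m kappabar x eta)
  + jact sigma (x, th) *m varpi (x, th).

Definition kappas (xi : Ss) : 'cV[R]_s :=
  let x := xi.1.1 in let eta := xi.1.2 in let th := xi.2 in
  - (k_eta *: (eta - sigma (x, th))) + Dt_sigma xi
  - gamma_s^-1 *: ((Ups x)^T *m (g x)^T *m gradx V (x, th)).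

End Construction.
End Defs.

From HB Require Import structures.
From mathcomp Require Import all_boot all_order all_algebra.
From mathcomp Require Import all_classical all_reals all_analysis.
From mathcomp Require Import ring lra.
Set Implicit Arguments. Unset Strict Implicit. Unset Printing Implicit Defensive.
Import Order.TTheory GRing.Theory Num.Theory.
Import numFieldNormedType.Exports.
Local Open Scope classical_set_scope.
Local Open Scope ring_scope.

(* Along the closed loop of the smooth extension, V_s decreases at the rate
   dV/dt - gamma_s k_eta |eta - sigma|^2: the cross term <grad_x V, g Ups (eta - sigma)>
   created by replacing sigma with eta in the input is cancelled by the last term of
   kappa_s.  Hence E_{V_s} lies on the graph eta = sigma(x, theta), where the smooth
   closed loop projects onto the closed loop of the extended system, so Psi_{V_s}
   projects into Psi_V.  On that graph V_s = V, while by Assumption 1 the minimum of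
   V_s over Theta exceeds that of V by at most gamma_s c_kappa, which is all the gap
   loses.  Sublevel sets of V_s stay compact because V_s <= eps bounds both V and
   |eta - sigma|. *)

Section LinearContinuous.
Context {R : realType}.

Definition lincont (U W : normedModType R) (L : U -> W) := linear L /\ continuous L.

Lemma lincont_differentiable (U W : normedModType R) (L : U -> W) x :
  lincont L -> differentiable L x.
Proof.
move=> [Llin Lcont].
exact: (@linear_differentiable _ _ _ (HB.pack L (GRing.isLinear.Build _ _ _ _ _ Llin))).
Qed.

Lemma diff_lincont (U W : normedModType R) (L : U -> W) x :
  lincont L -> 'd L x = L :> (U -> W).
Proof.
move=> [Llin Lcont].
exact: (@diff_lin _ _ _ (HB.pack L (GRing.isLinear.Build _ _ _ _ _ Llin))).
Qed.

Lemma derive_lincont (U W : normedModType R) (L : U -> W) x v :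
  lincont L -> 'D_v L x = L v.
Proof.
by move=> HL; rewrite deriveE ?diff_lincont //; exact: lincont_differentiable.
Qed.

Lemma derive_comp_lincont (U W Y : normedModType R) (F : W -> Y) (L : U -> W) x v :
  lincont L -> differentiable F (L x) ->
  'D_v (fun y => F (L y)) x = 'D_(L v) F (L x).
Proof.
move=> HL dF; have dL := lincont_differentiable x HL.
rewrite (@deriveE _ _ _ (F \o L)); last exact: differentiable_comp.
by rewrite diff_comp // (diff_lincont x HL) /= -deriveE.
Qed.

Lemma derive_lincont_comp (U W Y : normedModType R) (F : U -> W) (L : W -> Y) x v :
  lincont L -> differentiable F x ->
  'D_v (fun y => L (F y)) x = L ('D_v F x).
Proof.
move=> HL dF; have dL := lincont_differentiable (F x) HL.
rewrite (@deriveE _ _ _ (L \o F)); last exact: differentiable_comp.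
by rewrite diff_comp // (diff_lincont (F x) HL) /= -deriveE.
Qed.

Lemma is_derive_lincont (W Y : normedModType R) (phi : R -> W) (L : W -> Y) (t : R) d :
  lincont L -> is_derive t (1 : R) phi d ->
  is_derive t (1 : R) (fun u => L (phi u)) (L d).
Proof.
move=> HL [dphi Dphi]; have dp : differentiable phi t by apply/derivable1_diffP.
apply: DeriveDef; last by rewrite derive_lincont_comp // Dphi.
apply/derivable1_diffP; apply: (differentiable_comp (f := phi)) => //.
exact: lincont_differentiable.
Qed.

Lemma lincont_comp (U W Y : normedModType R) (F : U -> W) (L : W -> Y) :
  lincont F -> lincont L -> lincont (fun x => L (F x)).
Proof.
move=> [lF cF] [lL cL]; split; first by move=> a x y; rewrite lF lL.
by move=> x; apply: continuous_comp; [exact: cF | exact: cL].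
Qed.

Lemma continuous_pair (U W Y : normedModType R) (F : U -> W) (G : U -> Y) :
  continuous F -> continuous G -> continuous (fun x => (F x, G x)).
Proof. by move=> cF cG x; apply: cvg_pair; [exact: cF | exact: cG]. Qed.

Lemma lincont_pair (U W Y : normedModType R) (F : U -> W) (G : U -> Y) :
  lincont F -> lincont G -> lincont (fun x => (F x, G x)).
Proof.
move=> [lF cF] [lG cG]; split; first by move=> a x y; rewrite lF lG.
exact: continuous_pair.
Qed.

Lemma lincont_fst (U W : normedModType R) : lincont (@fst U W).
Proof. by split; [move=> a [x y] [z w] | move=> [a b]; exact: cvg_fst]. Qed.

Lemma lincont_snd (U W : normedModType R) : lincont (@snd U W).
Proof. by split; [move=> a [x y] [z w] | move=> [a b]; exact: cvg_snd]. Qed.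

Lemma lincont_coord p q (i : 'I_p) (j : 'I_q) :
  lincont (fun M : 'M[R]_(p, q) => M i j).
Proof. by split; [move=> a x y; rewrite !mxE | exact: coord_continuous]. Qed.

Lemma differentiable_coord (U : normedModType R) p q (h : U -> 'M[R]_(p, q)) i j x :
  differentiable h x -> differentiable (fun y => h y i j) x.
Proof.
by move=> dh; exact: differentiable_comp dh (lincont_differentiable _ (lincont_coord i j)).
Qed.

End LinearContinuous.

Section Smoothness.
Context {R : realType}.

Lemma Ck_differentiable k (U W : normedModType R) (F : U -> W) x :
  Ck k F -> differentiable F x.
Proof. by case: k => [[]|k []]. Qed.

Lemma smooth_differentiable (U W : normedModType R) (F : U -> W) x :
  smooth F -> differentiable F x.
Proof. by move=> /(_ 0%N) /Ck_differentiable. Qed.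

Lemma CkW k (U W : normedModType R) (F : U -> W) : Ck k.+1 F -> Ck k F.
Proof.
elim: k F => [|k IH] F [dF DF]; first by split.
by split => // v; apply: IH; exact: DF.
Qed.

Lemma eq_Ck k (U W : normedModType R) (F G : U -> W) : F =1 G -> Ck k F -> Ck k G.
Proof. by move=> /funext ->. Qed.

Lemma Ck_cst k (U W : normedModType R) (c : W) : Ck k (fun _ : U => c).
Proof.
elim: k c => [|k IH] c; first by split.
split => [x|v]; first exact: differentiable_cst.
apply: eq_Ck (IH 0) => x.
by rewrite deriveE ?diff_cst //; exact: differentiable_cst.
Qed.

Lemma CkD k (U W : normedModType R) (F G : U -> W) :
  Ck k F -> Ck k G -> Ck k (fun x => F x + G x).
Proof.
elim: k F G => [|k IH] F G CF CG.
  split => // x; apply: differentiableD;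
    [exact: Ck_differentiable CF | exact: Ck_differentiable CG].
have [dF DF] := CF; have [dG DG] := CG.
split => [x|v]; first exact: differentiableD.
apply: eq_Ck (IH _ _ (DF v) (DG v)) => x.
by rewrite deriveD //; exact: diff_derivable.
Qed.

Lemma CkZ k (U W : normedModType R) (c : R) (F : U -> W) :
  Ck k F -> Ck k (fun x => c *: F x).
Proof.
elim: k F => [|k IH] F CF.
  by split => // x; apply: differentiableZ; exact: Ck_differentiable CF.
have [dF DF] := CF.
split => [x|v]; first exact: differentiableZ.
apply: eq_Ck (IH _ (DF v)) => x.
by rewrite deriveZ //; exact: diff_derivable.
Qed.

Lemma Ck_sum k (U W : normedModType R) p (F : 'I_p -> U -> W) :
  (forall i, Ck k (F i)) -> Ck k (fun x => \sum_(i < p) F i x).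
Proof.
elim: p F => [|p IH] F CF.
  by apply: eq_Ck (Ck_cst k U 0) => x; rewrite big_ord0.
apply: eq_Ck (CkD (IH _ (fun i => CF (widen_ord (leqnSn p) i))) (CF ord_max)) => x.
by rewrite big_ord_recr.
Qed.

Lemma CkM k (U : normedModType R) (F G : U -> R) :
  Ck k F -> Ck k G -> Ck k (fun x => F x * G x).
Proof.
elim: k F G => [|k IH] F G CF CG.
  split => // x; apply: differentiableM;
    [exact: Ck_differentiable CF | exact: Ck_differentiable CG].
have [dF DF] := CF; have [dG DG] := CG.
split => [x|v]; first exact: differentiableM.
apply: eq_Ck (CkD (IH _ _ (DF v) (CkW CG)) (IH _ _ (CkW CF) (DG v))) => x.
rewrite deriveM; [|exact: diff_derivable..].
by rewrite addrC; congr (_ + _); exact: mulrC.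
Qed.

Lemma Ck_comp_lincont k (U W Y : normedModType R) (F : W -> Y) (L : U -> W) :
  lincont L -> Ck k F -> Ck k (fun x => F (L x)).
Proof.
elim: k F => [|k IH] F HL CF.
  split => // x; apply: differentiable_comp; first exact: lincont_differentiable.
  exact: Ck_differentiable CF.
have [dF DF] := CF.
split => [x|v].
  by apply: differentiable_comp => //; exact: lincont_differentiable.
apply: eq_Ck (IH _ HL (DF (L v))) => x.
by rewrite [RHS]derive_comp_lincont.
Qed.

Lemma Ck_lincont_comp k (U W Y : normedModType R) (F : U -> W) (L : W -> Y) :
  lincont L -> Ck k F -> Ck k (fun x => L (F x)).
Proof.
elim: k F => [|k IH] F HL CF.
  split => // x; apply: differentiable_comp; first exact: Ck_differentiable CF.
  exact: lincont_differentiable.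
have [dF DF] := CF.
split => [x|v].
  by apply: differentiable_comp => //; exact: lincont_differentiable.
apply: eq_Ck (IH _ HL (DF v)) => x.
by rewrite [RHS]derive_lincont_comp.
Qed.

Lemma smooth_lincont (U W : normedModType R) (L : U -> W) : lincont L -> smooth L.
Proof.
move=> HL [|k]; split=> //; try by move=> x; exact: lincont_differentiable.
move=> v; apply: eq_Ck (Ck_cst k U (L v)) => x.
by rewrite [RHS]derive_lincont.
Qed.

End Smoothness.

Section Vectors.
Context {R : realType}.

Definition dot p (u v : 'cV[R]_p) : R := \sum_(i < p) u i ord0 * v i ord0.

Lemma dotC p (u v : 'cV[R]_p) : dot u v = dot v u.
Proof. by apply: eq_bigr => i _; rewrite mulrC. Qed.

Lemma dotDr p (u v w : 'cV[R]_p) : dot u (v + w) = dot u v + dot u w.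
Proof. by rewrite /dot -big_split; apply: eq_bigr => i _; rewrite !mxE mulrDr. Qed.

Lemma dotZr p a (u v : 'cV[R]_p) : dot u (a *: v) = a * dot u v.
Proof. by rewrite /dot big_distrr; apply: eq_bigr => i _; rewrite !mxE mulrCA. Qed.

Lemma dot_mulmx p q (u : 'cV[R]_p) (M : 'M[R]_(p, q)) (v : 'cV[R]_q) :
  dot u (M *m v) = dot (M^T *m u) v.
Proof.
rewrite /dot.
under eq_bigr => i _ do rewrite mxE big_distrr /=.
under [RHS]eq_bigr => j _ do rewrite mxE big_distrl /=.
rewrite exchange_big /=; apply: eq_bigr => j _; apply: eq_bigr => i _.
by rewrite mxE; ring.
Qed.

Lemma sqnorm_dot p (u : 'cV[R]_p) : sqnorm u = dot u u.
Proof. by apply: eq_bigr => i _; rewrite expr2. Qed.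

Lemma sqnorm_ge0 p (v : 'cV[R]_p) : 0 <= sqnorm v.
Proof. by apply: sumr_ge0 => i _; exact: sqr_ge0. Qed.

Lemma sqnorm0 p : sqnorm (0 : 'cV[R]_p) = 0.
Proof. by rewrite /sqnorm big1 // => i _; rewrite mxE expr0n. Qed.

Lemma sqnorm_eq0 p (v : 'cV[R]_p) : (sqnorm v == 0) = (v == 0).
Proof.
apply/idP/eqP => [|->]; last by rewrite sqnorm0.
rewrite psumr_eq0 => [/allP v0|i _]; last exact: sqr_ge0.
apply/matrixP => i j; rewrite (ord1 j) mxE.
by apply/eqP; rewrite -sqrf_eq0; exact: v0 (mem_index_enum _).
Qed.

Lemma sqr_coord_le_sqnorm p (v : 'cV[R]_p) i : v i ord0 ^+ 2 <= sqnorm v.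
Proof.
by rewrite /sqnorm (bigD1 i) //= lerDl; apply: sumr_ge0 => j _; exact: sqr_ge0.
Qed.

Lemma sqnorm_fun_sum (U : Type) p (h : U -> 'cV[R]_p) :
  (fun y => sqnorm (h y)) = \sum_(i < p) (fun y => h y i ord0 * h y i ord0).
Proof.
by apply: funext => y; rewrite fct_sumE; apply: eq_bigr => i _; rewrite expr2.
Qed.

Lemma differentiable_sqnorm (U : normedModType R) p (h : U -> 'cV[R]_p) x :
  differentiable h x -> differentiable (fun y => sqnorm (h y)) x.
Proof.
move=> dh; rewrite sqnorm_fun_sum; apply: differentiable_sum => i.
by apply: differentiableM; exact: differentiable_coord.
Qed.

Lemma derive_sqnorm (U : normedModType R) p (h : U -> 'cV[R]_p) x v :
  differentiable h x -> 'D_v (fun y => sqnorm (h y)) x = 2 * dot (h x) ('D_v h x).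
Proof.
move=> dh; have dhi i := differentiable_coord i ord0 dh.
rewrite sqnorm_fun_sum derive_sum => [|i]; last exact/diff_derivable/differentiableM.
rewrite /dot big_distrr; apply: eq_bigr => i _.
rewrite deriveM; [|exact: diff_derivable..].
rewrite (derive_lincont_comp (L := fun M : 'cV[R]_p => M i ord0)) //.
  by rewrite /GRing.scale /=; ring.
exact: lincont_coord.
Qed.

End Vectors.

Section PartialDerivatives.
Context {R : realType}.

Lemma col_sum_ecol n (a : 'cV[R]_n) : a = \sum_(j < n) a j ord0 *: ecol R j.
Proof. by rewrite {1}(matrix_sum_delta a); apply: eq_bigr => j _; rewrite big_ord1. Qed.

Lemma pair_sum_ecol n r (a : 'cV[R]_n) (b : 'cV[R]_r) :
  (a, b) = \sum_(j < n) a j ord0 *: (ecol R j, 0)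
           + \sum_(j < r) b j ord0 *: (0, ecol R j).
Proof.
have -> : (a, b) = (a, 0) + (0, b) by congr (_, _); rewrite /= (addr0, add0r).
rewrite {1}(col_sum_ecol a) {1}(col_sum_ecol b); congr (_ + _).
  elim/big_rec2: _ => // j u v _ <-.
  by congr (_, _); rewrite /= scaler0 addr0.
elim/big_rec2: _ => // j u v _ <-.
by congr (_, _); rewrite /= scaler0 addr0.
Qed.

Lemma derive_pair_ecol (W : normedModType R) n r
    (F : 'cV[R]_n * 'cV[R]_r -> W) p a b :
  differentiable F p ->
  'D_(a, b) F p = \sum_(j < n) a j ord0 *: 'D_(ecol R j, 0) F p
                  + \sum_(j < r) b j ord0 *: 'D_(0, ecol R j) F p.
Proof.
move=> dF; rewrite deriveE // (pair_sum_ecol a b) linearD !linear_sum.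
by congr (_ + _); apply: eq_bigr => j _; rewrite linearZ deriveE.
Qed.

Lemma derive_jacE n r s (F : 'cV[R]_n * 'cV[R]_r -> 'cV[R]_s) p a b :
  differentiable F p -> 'D_(a, b) F p = jacx F p *m a + jact F p *m b.
Proof.
move=> dF; rewrite derive_pair_ecol //; congr (_ + _);
  apply/matrixP => i k; rewrite summxE mxE; apply: eq_bigr => j _;
  by rewrite !mxE (ord1 k) mulrC.
Qed.

Lemma derive_gradE n r (V : 'cV[R]_n * 'cV[R]_r -> R) p a :
  differentiable V p -> 'D_(a, 0) V p = dot (gradx V p) a.
Proof.
move=> dV; rewrite derive_pair_ecol // [X in _ + X]big1 ?addr0 => [|j _].
  by apply: eq_bigr => j _; rewrite mxE mulrC.
by rewrite mxE scale0r.
Qed.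

End PartialDerivatives.

Section Compactness.
Context {R : realType}.

Lemma continuous_trmx p q : continuous (fun M : 'M[R]_(p, q) => M^T).
Proof.
move=> u A /nbhs_ballP[e /= e0 eA].
apply/nbhs_ballP; exists e => //= v [_ uv]; apply: eA; split => // i j.
by rewrite !mxE; exact: uv.
Qed.

Lemma compact_tube n r s (K : set ('cV[R]_n * 'cV[R]_r))
    (sigma : 'cV[R]_n * 'cV[R]_r -> 'cV[R]_s) c :
  compact K -> continuous sigma ->
  exists2 K' : set (('cV[R]_n * 'cV[R]_s) * 'cV[R]_r), compact K' &
    [set xi | K (xi.1.1, xi.2) /\ sqnorm (xi.1.2 - sigma (xi.1.1, xi.2)) <= c]
    `<=` K'.
Proof.
move=> cK csigma.
pose box := [set v : 'rV[R]_s | forall i, `[- (1 + c), 1 + c]%classic (v ord0 i)].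
have cbox : compact ((fun v : 'rV[R]_s => v^T) @` box).
  apply: continuous_compact; first exact/continuous_subspaceT/continuous_trmx.
  by apply: (@rV_compact _ _ (fun=> `[- (1 + c), 1 + c]%classic)) => _;
    exact: segment_compact.
pose Phi (q : ('cV[R]_n * 'cV[R]_r) * 'cV[R]_s) := ((q.1.1, sigma q.1 + q.2), q.1.2).
have cPhi : continuous Phi.
  apply: continuous_pair; first apply: continuous_pair.
  - exact: (lincont_comp (lincont_fst _ _) (lincont_fst _ _)).2.
  - move=> q; apply: continuousD; last exact: (lincont_snd _ _).2.
    exact: continuous_comp ((lincont_fst _ _).2 q) (csigma _).
  - exact: (lincont_comp (lincont_fst _ _) (lincont_snd _ _)).2.
exists (Phi @` (K `*` ((fun v => v^T) @` box))).
  by apply: continuous_compact; [exact: continuous_subspaceT | exact: compact_setX].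
move=> [[x eta] th] /= [Kxth hc]; set h := eta - sigma (x, th).
exists ((x, th), h); last by rewrite /Phi /h /= addrC subrK.
split => //; exists h^T; last exact: trmxK.
move=> i; rewrite mxE /= in_itv /= -ler_norml.
have := sqr_coord_le_sqnorm h i; rewrite -real_normK ?num_real // => hi.
have := normr_ge0 (h i ord0); nra.
Qed.

End Compactness.

Lemma ereal_inf_shift_gt (R : realType) (T1 T2 : Type) (F1 : T1 -> R) (F2 : T2 -> R)
    (A1 : set T1) (A2 : set T2) (h : T2 -> T1) (d c : R) :
  (forall y, A2 y -> A1 (h y) /\ F1 (h y) - c <= F2 y) ->
  (d%:E < ereal_inf [set (F1 x)%:E | x in A1])%E ->
  ((d - c)%:E < ereal_inf [set (F2 y)%:E | y in A2])%E.
Proof.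
move=> hF dlt; rewrite EFinB.
apply: (lt_le_trans (lte_leB _ dlt (lexx _))) => //.
apply/ereal_infP => _ [y A2y <-]; have [A1hy le] := hF y A2y.
rewrite leeBlDr //; apply: le_trans (ereal_inf_lbound _) _; first by exists (h y).
by rewrite -EFinD lee_fin; lra.
Qed.

Section ImageInvariance.
Context {R : realType}.
Variables (U1 U2 : normedModType R) (r mi1 mi2 : nat).
Variables (Z1 : set U1) (fz1 : U1 * 'cV[R]_r -> U1)
  (G1 : U1 * 'cV[R]_r -> 'cV[R]_mi1 -> U1) (w1 : U1 * 'cV[R]_r -> 'cV[R]_r)
  (k1 : U1 * 'cV[R]_r -> 'cV[R]_mi1).
Variables (Z2 : set U2) (fz2 : U2 * 'cV[R]_r -> U2)
  (G2 : U2 * 'cV[R]_r -> 'cV[R]_mi2 -> U2) (w2 : U2 * 'cV[R]_r -> 'cV[R]_r)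
  (k2 : U2 * 'cV[R]_r -> 'cV[R]_mi2).
Variables (P : U1 * 'cV[R]_r -> U2 * 'cV[R]_r) (M : set (U1 * 'cV[R]_r)).
Hypothesis lincont_P : lincont P.
Hypothesis P_domain : forall y, domain Z1 y -> domain Z2 (P y).
Hypothesis P_clvf :
  forall y, M y -> P (clvf fz1 G1 w1 k1 y) = clvf fz2 G2 w2 k2 (P y).

Lemma sol_on_image I phi :
  sol_on Z1 fz1 G1 w1 k1 I phi -> (forall t, I t -> M (phi t)) ->
  sol_on Z2 fz2 G2 w2 k2 I (fun t => P (phi t)).
Proof.
move=> sol inM t It; have [Dt Dd] := sol t It; split; first exact: P_domain.
by rewrite -P_clvf; [exact: is_derive_lincont | exact: inM].
Qed.

Lemma weakly_inv_image :
  weakly_inv Z1 fz1 G1 w1 k1 M -> weakly_inv Z2 fz2 G2 w2 k2 (P @` M).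
Proof.
move=> [fwd bwd]; split.
- move=> _ [y My <-]; have [phi [phi0 [sol inM]]] := fwd y My.
  exists (fun t => P (phi t)); split; first by rewrite phi0.
  split; first exact: sol_on_image.
  by move=> t t0; exists (phi t) => //; exact: inM.
- move=> _ [q Mq <-] T T0; have [phi [M0 [phiT [sol inM]]]] := bwd q Mq T T0.
  exists (fun t => P (phi t)); split; first by exists (phi 0).
  split; first by rewrite phiT.
  split; first exact: sol_on_image.
  by move=> t t0; exists (phi t) => //; exact: inM.
Qed.

End ImageInvariance.

Section SmoothExtension.
Context {R : realType}.
Variables (n m r s : nat) (X : set 'cV[R]_n) (Theta : set 'cV[R]_r).
Variables (f : 'cV[R]_n -> 'cV[R]_n) (g : 'cV[R]_n -> 'M[R]_(n, m))
  (varpi : 'cV[R]_n * 'cV[R]_r -> 'cV[R]_r)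
  (varsigma : 'cV[R]_n -> 'cV[R]_m) (Ups : 'cV[R]_n -> 'M[R]_(m, s))
  (sigma : 'cV[R]_n * 'cV[R]_r -> 'cV[R]_s) (V : 'cV[R]_n * 'cV[R]_r -> R)
  (gamma k_eta : R).
Hypotheses (smooth_sigma : smooth sigma) (smooth_V : smooth V).
Hypotheses (gamma_gt0 : 0 < gamma) (k_eta_gt0 : 0 < k_eta).
Hypothesis V_ge0 : forall p, domain X p -> 0 <= V p.

Local Notation Ss := (('cV[R]_n * 'cV[R]_s) * 'cV[R]_r)%type.
Local Notation xth xi := (xi.1.1, xi.2).
Local Notation kappa := (kappa_dec varsigma Ups sigma).
Local Notation V_s := (Vs sigma V gamma).
Local Notation kappa_s := (kappas f g varpi varsigma Ups sigma V gamma k_eta).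
Local Notation clvf_c := (clvf (fc f) (gc g) varpi kappa).
Local Notation clvf_s :=
  (clvf (fs f g varsigma Ups) (@gs R n r s) (@varpis R n r s varpi) kappa_s).

Lemma lincont_xth : lincont (fun xi : Ss => xth xi).
Proof.
apply: lincont_pair; last exact: lincont_snd.
exact: lincont_comp (lincont_fst _ _) (lincont_fst _ _).
Qed.

Lemma lincont_eta : lincont (fun xi : Ss => xi.1.2).
Proof. exact: lincont_comp (lincont_fst _ _) (lincont_snd _ _). Qed.

Lemma smooth_Vs : smooth V_s.
Proof.
move=> k.
pose h i (xi : Ss) := xi.1.2 i ord0 + (-1) *: sigma (xth xi) i ord0.
have Ch i : Ck k (h i).
  apply: CkD.
    exact: smooth_lincont (lincont_comp lincont_eta (lincont_coord i ord0)) k.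
  apply: CkZ; apply: Ck_lincont_comp (lincont_coord i ord0) _.
  exact: Ck_comp_lincont lincont_xth (smooth_sigma k).
apply: eq_Ck (CkD (Ck_comp_lincont lincont_xth (smooth_V k))
  (CkZ (gamma / 2) (Ck_sum (fun i => CkM (Ch i) (Ch i))))) => xi.
rewrite /Vs /sqnorm /GRing.scale /=; congr (_ + _ * _); apply: eq_bigr => i _.
by rewrite expr2 /h !mxE scaleN1r.
Qed.

Lemma derive_Vs xi v :
  'D_v V_s xi = 'D_(xth v) V (xth xi)
    + gamma * dot (xi.1.2 - sigma (xth xi)) (v.1.2 - 'D_(xth v) sigma (xth xi)).
Proof.
have dV p : differentiable V p := smooth_differentiable p smooth_V.
have dsigma p : differentiable sigma p := smooth_differentiable p smooth_sigma.
have dVx : differentiable (fun y : Ss => V (xth y)) xi.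
  exact: differentiable_comp (lincont_differentiable _ lincont_xth) (dV _).
have dsx : differentiable (fun y : Ss => sigma (xth y)) xi.
  exact: differentiable_comp (lincont_differentiable _ lincont_xth) (dsigma _).
have deta : differentiable (fun y : Ss => y.1.2) xi.
  exact: lincont_differentiable lincont_eta.
have dh : differentiable (fun y : Ss => y.1.2 - sigma (xth y)) xi.
  exact: differentiableB.
have dsq : differentiable (fun y : Ss => sqnorm (y.1.2 - sigma (xth y))) xi.
  exact: differentiable_sqnorm.
have -> : V_s = fun y => V (xth y) + gamma / 2 *: sqnorm (y.1.2 - sigma (xth y)) by [].
rewrite deriveD; [|exact: diff_derivable|exact/diff_derivable/differentiableZ].
rewrite deriveZ; last exact: diff_derivable.
rewrite derive_sqnorm // deriveB; [|exact: diff_derivable..].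
rewrite (derive_comp_lincont (F := V) _ lincont_xth) //.
rewrite (derive_comp_lincont (F := sigma) _ lincont_xth) //.
rewrite (derive_lincont _ _ lincont_eta).
by congr (_ + _); rewrite /GRing.scale /=; field.
Qed.

Lemma xth_clvf_s xi :
  xth (clvf_s xi) = clvf_c (xth xi)
                    + (g xi.1.1 *m (Ups xi.1.1 *m (xi.1.2 - sigma (xth xi))), 0).
Proof.
case: xi => [[x eta] th]; congr (_, _); rewrite /= ?addr0 //.
rewrite /kappabar -addrA -!mulmxDr -addrA; congr (_ + _ *m (_ + _)).
by rewrite -mulmxDr addrC subrK.
Qed.

Lemma diff_Vs_clvf xi :
  'd V_s xi (clvf_s xi) = 'd V (xth xi) (clvf_c (xth xi))
                          - gamma * k_eta * sqnorm (xi.1.2 - sigma (xth xi)).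
Proof.
have dV p : differentiable V p := smooth_differentiable p smooth_V.
have dsigma p : differentiable sigma p := smooth_differentiable p smooth_sigma.
rewrite -!deriveE //; last exact: smooth_differentiable smooth_Vs.
rewrite derive_Vs.
have -> : 'D_(xth (clvf_s xi)) sigma (xth xi)
          = Dt_sigma f g varpi varsigma Ups sigma xi.
  by rewrite /= addr0 derive_jacE.
rewrite xth_clvf_s deriveE // linearD -!deriveE // derive_gradE //.
set h := xi.1.2 - sigma (xth xi).
have -> : (clvf_s xi).1.2 - Dt_sigma f g varpi varsigma Ups sigma xi
    = (- k_eta) *: h
      + (- gamma^-1) *: ((Ups xi.1.1)^T *m (g xi.1.1)^T *m gradx V (xth xi)).
  by rewrite /= add0r mul1mx /kappas addrAC addrK !scaleNr.
rewrite dotDr !dotZr -sqnorm_dot mulmxA dot_mulmx trmx_mul dotC.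
by field; rewrite gt_eqF.
Qed.

Lemma xth_clvf_s_graph xi :
  xi.1.2 = sigma (xth xi) -> xth (clvf_s xi) = clvf_c (xth xi).
Proof.
by move=> eta_sigma; rewrite xth_clvf_s eta_sigma subrr !mulmx0; exact: addr0.
Qed.

Hypothesis V_nonincr : forall p, domain X p -> 'd V p (clvf_c p) <= 0.

Lemma EW_Vs_graph xi :
  EW (Xs X) (fs f g varsigma Ups) (@gs R n r s) (@varpis R n r s varpi) V_s kappa_s xi ->
  xi.1.2 = sigma (xth xi) /\ EW X (fc f) (gc g) varpi V kappa (xth xi).
Proof.
move=> [Xxi]; rewrite diff_Vs_clvf => dVs0.
have := V_nonincr (p := xth xi) Xxi; have := sqnorm_ge0 (xi.1.2 - sigma (xth xi)).
have gk_gt0 : 0 < gamma * k_eta by exact: mulr_gt0.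
move=> sq_ge0 dV_le0.
have sq0 : sqnorm (xi.1.2 - sigma (xth xi)) = 0 by nra.
split; last by split => //; nra.
by apply/eqP; rewrite -subr_eq0 -sqnorm_eq0 sq0.
Qed.

Lemma PsiW_Vs_graph xi :
  PsiW (Xs X) (fs f g varsigma Ups) (@gs R n r s) (@varpis R n r s varpi) V_s kappa_s xi ->
  xi.1.2 = sigma (xth xi) /\ PsiW X (fc f) (gc g) varpi V kappa (xth xi).
Proof.
move=> [M [ME Minv] Mxi].
have Mgraph y (My : M y) := EW_Vs_graph (ME y My).
split; first exact: (Mgraph _ Mxi).1.
exists [set xth y | y in M]; last by exists xi.
split; first by move=> _ [y My <-]; exact: (Mgraph y My).2.
apply: weakly_inv_image Minv => //; first exact: lincont_xth.
by move=> y My; apply/xth_clvf_s_graph/(Mgraph y My).1.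
Qed.

Lemma Vs_ge0 xi : domain (Xs X) xi -> 0 <= V_s xi.
Proof.
move=> Xxi; apply: addr_ge0; first exact: V_ge0.
by apply: mulr_ge0; [apply: divr_ge0; [exact: ltW|] | exact: sqnorm_ge0].
Qed.

Lemma Vs_graphE xi : xi.1.2 = sigma (xth xi) -> V_s xi = V (xth xi).
Proof. by move=> eta_sigma; rewrite /Vs eta_sigma subrr sqnorm0 mulr0 addr0. Qed.

Lemma Vs_eq0 (A : set ('cV[R]_n * 'cV[R]_r)) xi :
  (forall p, domain X p -> V p = 0 <-> A p) ->
  domain (Xs X) xi -> V_s xi = 0 <-> As sigma X A xi.
Proof.
move=> V_eq0 Xxi; split => [|[_ [Axi eta_sigma]]].
  have g2_gt0 : 0 < gamma / 2 by rewrite divr_gt0.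
  rewrite /Vs => /eqP; rewrite paddr_eq0; first last.
  - by rewrite mulr_ge0 ?sqnorm_ge0 ?ltW.
  - exact: V_ge0.
  rewrite mulf_eq0 (gt_eqF g2_gt0) sqnorm_eq0 subr_eq0 => /andP[/eqP V0 /eqP eta_sigma].
  by split => //; split => //; exact/V_eq0.
by rewrite Vs_graphE //; exact/V_eq0.
Qed.

Lemma muW_Vs_ge xi c :
  Theta !=set0 -> domain (Xs X) xi -> xi.1.2 = sigma (xth xi) ->
  (forall tb, Theta tb -> sqnorm (sigma (xth xi) - sigma (xi.1.1, tb)) <= 2 * c) ->
  muW V Theta (xth xi) - gamma * c <= muW V_s Theta xi.
Proof.
move=> [tb0 Ttb0] Xxi eta_sigma spread; rewrite /muW Vs_graphE //=.
suff : inf [set V_s (xi.1, tb) | tb in Theta] - gamma * c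
       <= inf [set V (xi.1.1, tb) | tb in Theta] by lra.
apply: lb_le_inf; first by exists (V (xi.1.1, tb0)), tb0.
move=> _ [tb Ttb <-].
have : inf [set V_s (xi.1, tb) | tb in Theta] <= V_s (xi.1, tb).
  apply: ge_inf; last by exists tb.
  by exists 0 => _ [tb' _ <-]; exact: Vs_ge0.
have : gamma / 2 * sqnorm (xi.1.2 - sigma (xi.1.1, tb)) <= gamma * c.
  rewrite [gamma * c](_ : _ = gamma / 2 * (2 * c)); last by field.
  by rewrite ler_pM2l ?divr_gt0 // eta_sigma; exact: spread.
rewrite /Vs /=; lra.
Qed.

Lemma compact_sublevel_Vs eps : closed X ->
  compact [set p | domain X p /\ V p <= eps] ->
  compact [set xi | domain (Xs X) xi /\ V_s xi <= eps].
Proof.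
move=> cX cK.
have csigma : continuous sigma.
  by move=> p; apply: differentiable_continuous; exact: smooth_differentiable.
have [K' cK' subK'] := compact_tube (2 * eps / gamma) cK csigma.
apply: subclosed_compact cK' _.
  have closed_Xs : closed ((fun xi : Ss => xi.1.1) @^-1` X).
    have cont : continuous (fun xi : Ss => xi.1.1).
      exact: (lincont_comp (lincont_fst _ _) (lincont_fst _ _)).2.
    exact: (preimage_closed (f := fun xi : Ss => xi.1.1) (fun xi _ => cont xi) cX).
  have closed_Vs_le : closed (V_s @^-1` [set x | x <= eps]).
    apply: (@preimage_closed _ _ V_s [set x | x <= eps]); last exact: closed_le.
    by move=> xi _; exact/differentiable_continuous/(smooth_differentiable _ smooth_Vs).
  exact: closedI closed_Xs closed_Vs_le.
move=> xi [Xxi]; rewrite /Vs mulrAC => le_eps; apply: subK'.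
have := V_ge0 (p := xth xi) Xxi.
have : 0 <= gamma * sqnorm (xi.1.2 - sigma (xth xi)).
  by rewrite mulr_ge0 ?sqnorm_ge0 ?ltW.
move=> gsq_ge0 V_ge0'; split; first by split => //; lra.
by rewrite ler_pdivlMr // mulrC; lra.
Qed.

End SmoothExtension.

Theorem proposition1 (R : realType) (n m r s : nat)
  (X : set 'cV[R]_n)
  (f : 'cV[R]_n -> 'cV[R]_n) (g : 'cV[R]_n -> 'M[R]_(n, m))
  (Theta : set 'cV[R]_r) (varpi : 'cV[R]_n * 'cV[R]_r -> 'cV[R]_r)
  (V : 'cV[R]_n * 'cV[R]_r -> R)
  (varsigma : 'cV[R]_n -> 'cV[R]_m) (Ups : 'cV[R]_n -> 'M[R]_(m, s))
  (sigma : 'cV[R]_n * 'cV[R]_r -> 'cV[R]_s)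
  (A : set ('cV[R]_n * 'cV[R]_r)) (delta c_kappa gamma_s k_eta : R) :
  closed X -> X !=set0 ->
  smooth f -> smooth g ->
  (0 < r)%N -> finite_set Theta -> Theta !=set0 ->
  smooth varpi ->
  smooth varsigma -> smooth Ups -> smooth sigma ->
  compact A -> 0 < delta ->
  synergistic X (fc f) (gc g) varpi V (kappa_dec varsigma Ups sigma)
    Theta A delta ->
  0 < c_kappa ->
  (forall xi, (PsiW X (fc f) (gc g) varpi V (kappa_dec varsigma Ups sigma)
                 `\` A) xi ->
     forall tb, Theta tb -> sqnorm (sigma xi - sigma (xi.1, tb)) <= 2 * c_kappa) ->
  0 < gamma_s -> gamma_s < delta / c_kappa -> 0 < k_eta ->
  forall delta_s : R, 0 < delta_s -> delta_s <= delta - gamma_s * c_kappa ->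
  synergistic (@Xs R n s X) (fs f g varsigma Ups) (@gs R n r s)
    (@varpis R n r s varpi)
    (Vs sigma V gamma_s)
    (kappas f g varpi varsigma Ups sigma V gamma_s k_eta)
    Theta (As sigma X A) delta_s.
Proof.
move=> cX _ _ _ _ _ Theta0 _ _ _ smooth_sigma _ _
  [smooth_V [V_ge0 [V_sublevel [V_eq0 [V_nonincr V_gap]]]]] _ spread
  gamma_gt0 _ k_eta_gt0 delta_s _ delta_s_le.
split; first exact: smooth_Vs.
split; first exact: Vs_ge0.
split; first by move=> eps eps_ge0; exact: compact_sublevel_Vs (V_sublevel eps eps_ge0).
split; first by move=> xi; apply: Vs_eq0.
split.
  move=> xi Xxi; rewrite diff_Vs_clvf //; have := V_nonincr (xi.1.1, xi.2) Xxi.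
  have : 0 <= gamma_s * k_eta * sqnorm (xi.1.2 - sigma (xi.1.1, xi.2)).
    by rewrite !mulr_ge0 ?sqnorm_ge0 ?ltW.
  lra.
apply: le_lt_trans (ereal_inf_shift_gt (h := fun xi => (xi.1.1, xi.2))
  (c := gamma_s * c_kappa) _ V_gap); first by rewrite lee_fin.
move=> xi [Psi_xi notAs].
have [eta_sigma Psi_c] :=
  PsiW_Vs_graph smooth_sigma smooth_V gamma_gt0 k_eta_gt0 V_nonincr Psi_xi.
have [M [ME _] Mxi] := Psi_c; have [Xxi _] := ME _ Mxi.
have notA : ~ A (xi.1.1, xi.2) by move=> Axi; apply: notAs.
split; first by [].
apply: (muW_Vs_ge gamma_gt0 V_ge0 Theta0 Xxi eta_sigma).
exact: (spread _ (conj Psi_c notA)).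
Qed.
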